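(* For every prime $p$, as $v\to\infty$, $g_p'(v)\ge(1+o(1))v^2/49$; consequently, as $t\to\infty$, $g_p(t)\le(7+o(1))\sqrt{t}$.
   Context: For a prime $p$, the addition table of $\mathbb{Z}_p^m$ is the set of triples (faces) $(a,b,a+b)$, $a,b\in\mathbb{Z}_p^m$, viewed as a tripartite 3-uniform hypergraph whose vertices are rows, columns and labels (three disjoint copies of $\mathbb{Z}_p^m$). A set of vertices spans a face if all three vertices of the face are in the set. $g_p'(v)$ is the maximal number of faces that can be spanned by a set of $v$ vertices in the addition table of $\mathbb{Z}_p^m$, for any $m$ sufficiently large in terms of $v$ and $p$. An $(r,s)$-configuration is a collection of $s$ faces involving at most $r$ vertices in total. $g_p(t)$ is the least integer $r$ such that the addition table of $\mathbb{Z}_p^m$ contains an $(r,t)$-configuration for all $m$ sufficiently large in terms of $t$ and $p$. *)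

From HB Require Import structures.
From mathcomp Require Import all_boot all_order all_algebra.
From mathcomp Require Import reals.
Set Implicit Arguments. Unset Strict Implicit. Unset Printing Implicit Defensive.
Import Order.TTheory GRing.Theory Num.Theory.
Local Open Scope ring_scope.

Definition grp (p m : nat) : finType := 'rV['F_p]_m.

(* Vertices of the addition table: rows, columns, labels, three disjoint
   copies of Z_p^m. *)
Definition vert (p m : nat) : finType := ((grp p m + grp p m) + grp p m)%type.
Definition rowv p m (a : grp p m) : vert p m := inl (inl a).
Definition colv p m (b : grp p m) : vert p m := inl (inr b).
Definition labv p m (c : grp p m) : vert p m := inr c.

Definition face_verts p m (f : grp p m * grp p m) : {set vert p m} :=
  [set rowv f.1; colv f.2; labv (f.1 + f.2)].

Definition spanned p m (S : {set vert p m}) : nat :=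
  #|[set f : grp p m * grp p m | face_verts f \subset S]|.

Definition maxspan p m (v : nat) : nat :=
  (\max_(S : {set vert p m} | #|S| == v) spanned S)%N.

(* g = g_p'(v): maxspan p m v equals g for all m sufficiently large. *)
Definition is_gp' (p v g : nat) : Prop :=
  exists M : nat, forall m : nat, (M <= m)%N -> maxspan p m v = g.

(* An (r,s)-configuration in the addition table of Z_p^m: a collection of
   s faces involving at most r vertices in total. *)
Definition has_config (p m r s : nat) : Prop :=
  exists F : {set grp p m * grp p m},
    #|F| = s /\ (#|\bigcup_(f in F) face_verts f| <= r)%N.

Definition eventually_config (p r t : nat) : Prop :=
  exists M : nat, forall m : nat, (M <= m)%N -> has_config p m r t.

Definition is_gp (p t r : nat) : Prop :=
  eventually_config p r t /\
  forall r' : nat, eventually_config p r' t -> (r <= r')%N.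

From HB Require Import structures.
From mathcomp Require Import all_boot all_order all_algebra.
From mathcomp Require Import reals.
From mathcomp Require Import zify lra.
From Stdlib Require Import Classical Wf_nat.
Import Order.TTheory GRing.Theory Num.Theory.
Local Open Scope ring_scope.
Set Implicit Arguments. Unset Strict Implicit. Unset Printing Implicit Defensive.

(* For s <= (p + 1) / 2 and k < m, let A_s be the set of vectors of Z_p^m
   supported on the first k + 1 coordinates whose coordinate k, read as an
   integer, is below s.  Then |A_s| = s p^k and A_s + A_s is contained in
   A_(2s-1), so the rows and columns indexed by A_s together with the labels
   indexed by A_(2s-1) are (4s - 1) p^k vertices spanning |A_s|^2 faces.
   Choosing k with 3 p^k <= v < 3 p^(k+1), so that q = v / p^k lies in
   [3, 3p), and s = min((q+1)/4, (p+1)/2) fits this into v vertices with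
   v <= 7 |A_s|, whence g_p'(v) >= v^2/49; the value g_p'(v) exists since
   the maximum is nondecreasing in m and at most v^2.  Any t of these faces,
   with v the least integer such that 49 t <= v^2, give
   g_p(t) <= v < 7 sqrt t + 1. *)

Lemma ex_least (P : nat -> Prop) :
  (exists n, P n) -> exists n, P n /\ forall k, P k -> (n <= k)%N.
Proof.
move=> exP.
have [n [[Pn n_least] _]] :=
  @dec_inh_nat_subset_has_unique_least_element P (fun n => classic (P n)) exP.
by exists n; split=> // k /n_least/ssrnat.leP.
Qed.

Lemma nondecreasing_bounded_stable (f : nat -> nat) (B : nat) :
  {homo f : m n / (m <= n)%N} -> (forall m, (f m <= B)%N) ->
  exists M, forall m, (M <= m)%N -> f m = f M.
Proof.
move=> f_mono f_le.
have [[|n] [ub_n n_least]] :=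
  ex_least (ex_intro (fun n => forall m, f m <= n)%N B f_le).
  by exists 0%N => m _; have := ub_n m; have := ub_n 0%N; lia.
have [M /negP] : exists M, ~ (f M <= n)%N.
  by apply: not_all_ex_not => ub_n'; have := n_least _ ub_n'; lia.
rewrite -ltnNge => lt_n_fM; exists M => m le_Mm.
by have := f_mono _ _ le_Mm; have := ub_n m; lia.
Qed.

Lemma ex_card_between (T : finType) (A X : {set T}) (n : nat) :
  A \subset X -> (#|A| <= n <= #|X|)%N ->
  exists B : {set T}, [/\ A \subset B, B \subset X & #|B| = n].
Proof.
move=> sAX /andP[le_An le_nX].
have /card_geqP[s [uniq_s size_s sub_s]] : (n - #|A| <= #|X :\: A|)%N.
  by rewrite cardsD (setIidPr sAX); lia.
have disj_s : A :&: [set x in s] = set0.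
  apply/setP => x; rewrite !inE; apply/andP => -[xA /sub_s].
  by rewrite inE xA.
exists (A :|: [set x in s]); split; first exact: subsetUl.
  rewrite subUset sAX; apply/subsetP => x; rewrite inE => /sub_s.
  by rewrite inE => /andP[].
by rewrite cardsU disj_s cards0 cardsE (card_uniqP uniq_s); lia.
Qed.

Section WidenRow.
Variables (R : nmodType) (m n : nat).

Definition widen_row (x : 'rV[R]_m) : 'rV[R]_n :=
  \row_(j < n) \sum_(i < m | val i == val j) x 0 i.

Lemma widen_rowD : {morph widen_row : x y / x + y}.
Proof.
move=> x y; apply/rowP => j; rewrite !mxE -big_split.
by apply: eq_bigr => i _; rewrite mxE.
Qed.

Lemma widen_rowE (x : 'rV[R]_m) (i : 'I_m) (j : 'I_n) :
  val i = val j -> widen_row x 0 j = x 0 i.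
Proof. by move=> eij; rewrite mxE (big_pred1 i) // => i' /=; rewrite -eij. Qed.

Lemma widen_row_inj : (m <= n)%N -> injective widen_row.
Proof.
move=> le_mn x y exy; apply/rowP => i.
have coord z : widen_row z 0 (widen_ord le_mn i) = z 0 i by exact: widen_rowE.
by rewrite -coord exy coord.
Qed.

End WidenRow.

Lemma face_verts_subset p m (f : grp p m * grp p m) (S : {set vert p m}) :
  (face_verts f \subset S) =
  [&& rowv f.1 \in S, colv f.2 \in S & labv (f.1 + f.2) \in S].
Proof. by rewrite !subUset !sub1set andbA. Qed.

Lemma card_vert p m : prime p -> #|{: vert p m}| = (3 * p ^ m)%N.
Proof. by move=> p_pr; rewrite !card_sum card_mx card_Fp // mul1n; lia. Qed.

Lemma spanned_le p m (S : {set vert p m}) : (spanned S <= #|S| * #|S|)%N.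
Proof.
have inj : injective (fun f : grp p m * grp p m => (rowv f.1, colv f.2)).
  by move=> [a b] [c d] [-> ->].
rewrite /spanned -(card_imset _ inj) -cardsX; apply: subset_leq_card.
apply/subsetP => x /imsetP[f]; rewrite inE face_verts_subset.
by case/and3P => rowS colS _ ->; rewrite inE rowS colS.
Qed.

Definition widen_vert p m n (x : vert p m) : vert p n :=
  match x with
  | inl (inl a) => rowv (widen_row n a)
  | inl (inr b) => colv (widen_row n b)
  | inr c => labv (widen_row n c)
  end.

Lemma maxspan_mono p v : {homo maxspan p ^~ v : m n / (m <= n)%N}.
Proof.
move=> m n le_mn; apply/bigmax_leqP => S /eqP card_S.
have inj := @widen_row_inj 'F_p _ _ le_mn.
have injv : injective (@widen_vert p m n).
  by move=> [[a|a]|a] [[b|b]|b] //= [] /inj ->.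
apply: leq_trans (leq_bigmax_cond (widen_vert n @: S) _); last first.
  by rewrite card_imset // card_S.
have injf : injective (fun f : grp p m * grp p m =>
                         (widen_row n f.1, widen_row n f.2)).
  by move=> [a b] [c d] /= [] /inj -> /inj ->.
rewrite /spanned -(card_imset _ injf); apply: subset_leq_card.
apply/subsetP => x /imsetP[f]; rewrite inE face_verts_subset.
case/and3P => rowS colS labS ->; rewrite inE face_verts_subset /= -widen_rowD.
by rewrite (imset_f _ rowS) (imset_f _ colS) (imset_f _ labS).
Qed.

Lemma gp'_exists p v : exists g, is_gp' p v g.
Proof.
have le_sq m : (maxspan p m v <= v * v)%N.
  by apply/bigmax_leqP => S /eqP <-; exact: spanned_le.
have [M stable_M] := nondecreasing_bounded_stable (@maxspan_mono p v) le_sq.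
by exists (maxspan p M v), M.
Qed.

Section Slab.
Variables (p m k : nat).

Definition slab_vec s (x : 'I_s * 'rV['F_p]_k) : grp p m :=
  widen_row m (row_mx x.2 (x.1%:R)%:M).

Definition slab s : {set grp p m} :=
  [set slab_vec x | x in [set: 'I_s * 'rV_k]].

Lemma card_slab s : prime p -> (k < m)%N -> (s <= p)%N ->
  #|slab s| = (s * p ^ k)%N.
Proof.
move=> p_pr lt_km le_sp.
rewrite card_imset ?cardsT ?card_prod ?card_ord ?card_mx ?card_Fp ?mul1n //.
have le_k1m : (k + 1 <= m)%N by rewrite addn1.
move=> [i y] [j z] /(widen_row_inj le_k1m)/eq_row_mx[/= -> /rowP/(_ 0)].
rewrite !mxE !mulr1n => /(congr1 (@nat_of_ord _)).
rewrite !val_Fp_nat // !modn_small => [/val_inj -> //||].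
- exact: leq_trans (ltn_ord j) le_sp.
- exact: leq_trans (ltn_ord i) le_sp.
Qed.

Lemma slab_add s a b : (0 < s)%N ->
  a \in slab s -> b \in slab s -> a + b \in slab (s + s).-1.
Proof.
move=> s_gt0 /imsetP[[i y] _ ->] /imsetP[[j z] _ ->].
have lt_ij : (i + j < (s + s).-1)%N.
  by have := ltn_ord i; have := ltn_ord j; lia.
apply/imsetP; exists (Ordinal lt_ij, y + z); first by rewrite inE.
by rewrite /slab_vec -widen_rowD add_row_mx /= natrD raddfD.
Qed.

End Slab.

Lemma slab_parameters p v : prime p -> (3 <= v)%N -> exists k s,
  [/\ (0 < s)%N, (s + s <= p + 1)%N, ((4 * s - 1) * p ^ k <= v)%N
    & (v <= 7 * s * p ^ k)%N].
Proof.
move=> p_pr v_ge3; have p_gt1 := prime_gt1 p_pr.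
have v3_gt0 : (0 < v %/ 3)%N by rewrite divn_gt0.
have /andP[le_Pv3 lt_v3] := trunc_log_bounds p_gt1 v3_gt0.
set k := trunc_log p (v %/ 3) in le_Pv3 lt_v3.
set P := (p ^ k)%N in le_Pv3 lt_v3 *.
have P_gt0 : (0 < P)%N by rewrite expn_gt0; lia.
have le_3P_v : (3 * P <= v)%N by rewrite mulnC -leq_divRL.
have lt_v_3pP : (v < 3 * p * P)%N.
  have := ltn_ceil v (isT : (0 < 3)%N); rewrite expnS -/P in lt_v3.
  by move: lt_v3 (v %/ 3)%N => w; nia.
pose q := (v %/ P)%N.
have q_ge3 : (3 <= q)%N by rewrite leq_divRL.
have q_lt3p : (q < 3 * p)%N by rewrite ltn_divLR.
pose s := minn ((q + 1) %/ 4) ((p + 1) %/ 2).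
exists k, s; split; rewrite -/P; try lia.
  apply: leq_trans (leq_divM v P); rewrite leq_mul2r; apply/orP; right; lia.
apply: ltnW; apply: leq_trans (ltn_ceil v P_gt0) _; rewrite leq_mul2r -addn1.
by apply/orP; right; lia.
Qed.

Lemma dense_configuration p v : prime p -> (3 <= v)%N ->
  exists k, forall m, (k < m)%N ->
    exists (A : {set grp p m}) (S : {set vert p m}),
      [/\ (#|S| <= v)%N, (v * v <= 49 * (#|A| * #|A|))%N
        & forall f, f \in setX A A -> face_verts f \subset S].
Proof.
move=> p_pr v_ge3.
have [k [s [s_gt0 le_2s le_v ge_v]]] := slab_parameters p_pr v_ge3.
exists k => m lt_km; pose A := slab p m k s; pose C := slab p m k (s + s).-1.
have card_A : #|A| = (s * p ^ k)%N by apply: card_slab => //; lia.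
have card_C : #|C| = ((s + s).-1 * p ^ k)%N by apply: card_slab => //; lia.
exists A, ([set rowv a | a in A] :|: [set colv a | a in A]
            :|: [set labv c | c in C]).
split.
- apply: leq_trans (leq_card_setU _ _) _; apply: leq_trans le_v.
  apply: (@leq_trans (#|A| + #|A| + #|C|)).
    apply: leq_add; last exact: leq_imset_card.
    apply: leq_trans (leq_card_setU _ _) _.
    by apply: leq_add; apply: leq_imset_card.
  by rewrite card_A card_C -!mulnDl leq_mul2r; apply/orP; right; lia.
- have le_vA : (v <= 7 * #|A|)%N by rewrite card_A mulnA.
  by rewrite (_ : 49 = 7 * 7)%N // mulnACA leq_mul.
- move=> [a b]; rewrite inE /= => /andP[aA bA].
  rewrite face_verts_subset /= !inE.
  have abC : a + b \in C by exact: slab_add.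
  by rewrite (imset_f _ aA) (imset_f _ bA) (imset_f _ abC) ?orbT.
Qed.

Lemma gp'_lower_bound p v : prime p -> (3 <= v)%N ->
  exists g, is_gp' p v g /\ (v * v <= 49 * g)%N.
Proof.
move=> p_pr v_ge3; have [g [M maxspanE]] := gp'_exists p v.
have [k dense] := dense_configuration p_pr v_ge3.
have [m [le_Mm lt_km le_vm]] : exists m, [/\ M <= m, k < m & v <= m]%N.
  by exists (maxn M (maxn k.+1 v)); rewrite !leq_max !leqnn !orbT.
have [A [S [le_Sv le_vA faces_S]]] := dense m lt_km.
have le_v_vert : (v <= #|[set: vert p m]|)%N.
  by rewrite cardsT card_vert //; have := ltn_expl m (prime_gt1 p_pr); lia.
have [S' [sSS' _ card_S']] :=
  ex_card_between (subsetT S) (introT andP (conj le_Sv le_v_vert)).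
exists g; split; first by exists M.
rewrite -(maxspanE m le_Mm); apply: leq_trans le_vA _.
rewrite leq_mul2l -cardsX; apply/orP; right.
apply: (leq_trans _ (leq_bigmax_cond S' _)); last by rewrite card_S'.
apply: subset_leq_card; apply/subsetP => f fAA.
by rewrite inE; exact: subset_trans (faces_S f fAA) sSS'.
Qed.

Lemma eventually_config_sq p t v : prime p -> (3 <= v)%N ->
  (49 * t <= v * v)%N -> eventually_config p v t.
Proof.
move=> p_pr v_ge3 le_tv; have [k dense] := dense_configuration p_pr v_ge3.
exists k.+1 => m lt_km; have [A [S [le_Sv le_vA faces_S]]] := dense m lt_km.
have le_tA : (#|set0 : {set grp p m * grp p m}| <= t <= #|setX A A|)%N.
  rewrite cards0 leq0n /= cardsX -(@leq_pmul2l 49) //.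
  exact: leq_trans le_tv le_vA.
have [F [_ sub_F card_F]] := ex_card_between (sub0set (setX A A)) le_tA.
exists F; split => //; apply: leq_trans le_Sv; apply: subset_leq_card.
by apply/bigcupsP => f /(subsetP sub_F); exact: faces_S.
Qed.

Lemma gp_sqrt_bound p t : prime p -> (0 < t)%N ->
  exists r, is_gp p t r /\ (r.-1 * r.-1 < 49 * t)%N.
Proof.
move=> p_pr t_gt0.
have ex_v : exists v, (49 * t <= v * v)%N.
  by exists (49 * t)%N; rewrite leq_pmulr // muln_gt0 t_gt0.
case: (ex_minnP ex_v) => v le_tv v_min.
have v_ge3 : (3 <= v)%N by nia.
have ev_v : eventually_config p v t by exact: eventually_config_sq.
have [r [ev_r r_min]] := ex_least (ex_intro (eventually_config p ^~ t) v ev_v).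
exists r; split; first by split=> // r' /r_min.
have le_rv : (r <= v)%N by exact: r_min.
have lt_v1 : (v.-1 * v.-1 < 49 * t)%N.
  by rewrite ltnNge; apply/negP => /v_min; lia.
have le_r1 : (r.-1 <= v.-1)%N by rewrite -!subn1 leq_sub2r.
exact: leq_ltn_trans (leq_mul le_r1 le_r1) lt_v1.
Qed.

Lemma sqrt_bound_eventually (R : archiRcfType) (eps : R) : 0 < eps ->
  exists T : nat, forall t r : nat, (T <= t)%N -> (r.-1 * r.-1 < 49 * t)%N ->
    r%:R <= (7%:R + eps) * Num.sqrt t%:R.
Proof.
move=> eps_gt0; pose n := Num.Def.archi_bound eps^-1.
have lt_n : eps^-1 < n%:R by apply: archi_boundP; rewrite invr_ge0 ltW.
exists (n * n)%N => t r le_t lt_r.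
set s := Num.sqrt t%:R; have s_ge0 : 0 <= s := sqrtr_ge0 _.
have n_le_s : n%:R <= s.
  rewrite -(ger0_norm (ler0n R n)) -sqrtr_sqr ler_sqrt //.
  by rewrite -natrX ler_nat -mulnn.
have eps_s : 1 <= eps * s.
  rewrite -(mulfV (lt0r_neq0 eps_gt0)) ler_pM2l //.
  exact: ltW (lt_le_trans lt_n n_le_s).
have lt_r1 : r.-1%:R < 7%:R * s.
  rewrite -(ltr_pXn2r (_ : 0 < 2)%N) ?nnegrE ?mulr_ge0 // exprMn sqr_sqrtr //.
  by rewrite -!natrX -natrM ltr_nat -!mulnn.
have le_r : r%:R <= r.-1%:R + 1 :> R by rewrite natr1 ler_nat; lia.
by rewrite mulrDl; lra.
Qed.

Unset Implicit Arguments.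

Theorem proposition2 (R : realType) (p : nat) (hp : prime p) :
  (forall eps : R, 0 < eps ->
     exists V : nat, forall v : nat, (V <= v)%N ->
       exists g : nat, is_gp' p v g /\
         (1 - eps) * (v%:R ^+ 2 / 49%:R) <= g%:R)
  /\
  (forall eps : R, 0 < eps ->
     exists T : nat, forall t : nat, (T <= t)%N ->
       exists r : nat, is_gp p t r /\
         r%:R <= (7%:R + eps) * Num.sqrt (t%:R)).
Proof.
split=> eps eps_gt0.
- exists 3%N => v v_ge3; have [g [gp'_g le_vg]] := gp'_lower_bound hp v_ge3.
  exists g; split=> //; apply: le_trans (_ : v%:R ^+ 2 / 49%:R <= g%:R).
    by rewrite ler_piMl ?divr_ge0 ?exprn_ge0 // lerBlDr lerDl ltW.
  by rewrite ler_pdivrMr ?ltr0n // mulrC expr2 -!natrM ler_nat.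
- have [T sqrt_bound] := sqrt_bound_eventually eps_gt0.
  exists (maxn 1 T) => t; rewrite geq_max => /andP[t_gt0 le_Tt].
  have [r [gp_r lt_r]] := gp_sqrt_bound hp t_gt0.
  by exists r; split=> //; exact: sqrt_bound.
Qed.
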